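(* Let $(u_S,u_R)$ be a transparent environment satisfying no-duplicate-actions. If commitment has no value, then there exists a simple babbling cheap-talk equilibrium $(\sigma,\rho)$ with $U_S(\sigma,\rho)$ equal to the persuasion payoff.
   Context: $A$ and $\Omega$ are finite nonempty sets, $\mu_0$ a prior on $\Omega$ with $\mu_0(\omega)>0$ for all $\omega$, $M$ a finite message set with $|M|>\max\{|\Omega|,|A|\}$. An environment is a pair of functions $u_S,u_R:A\times\Omega\to[0,1]$. It is transparent if there is $v:A\to\mathbb R$ with $u_S(a,\omega)=v(a)$ for all $a,\omega$; it satisfies no-duplicate-actions if $v(a)\ne v(a')$ for all $a\ne a'$. Messaging strategies $\sigma:\Omega\to\Delta M$, action strategies $\rho:M\to\Delta A$, $U_i(\sigma,\rho)=\sum_{\omega,m,a}\mu_0(\omega)\sigma(m|\omega)\rho(a|m)u_i(a,\omega)$. $(\sigma,\rho)$ is S-BR if $\sigma\in\arg\max_{\sigma'}U_S(\sigma',\rho)$ and R-BR if $\rho\in\arg\max_{\rho'}U_R(\sigma,\rho')$; a cheap-talk equilibrium is both. Persuasion payoff: max of $U_S$ over R-BR profiles; cheap-talk payoff: max over cheap-talk equilibria; commitment has no value if they are equal. $M_\sigma=\{m:\sigma(m|\omega)>0\text{ for some }\omega\}$. A simple babbling cheap-talk equilibrium is a cheap-talk equilibrium $(\sigma,\rho)$ with $|M_\sigma|=1$ and some $a_0\in A$ such that $\rho(a_0|m)=1$ for all $m\in M$. *)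

From mathcomp Require Import all_boot all_order all_algebra.
From mathcomp Require Import reals.
Set Implicit Arguments. Unset Strict Implicit. Unset Printing Implicit Defensive.
Import Order.TTheory GRing.Theory Num.Theory.
Local Open Scope ring_scope.

Section CheapTalk.
Variables (R : realType) (A Om M : finType).

Definition is_distr (T : finType) (p : T -> R) : Prop :=
  (forall t, 0 <= p t) /\ \sum_(t : T) p t = 1.

Definition msg_strat (sigma : Om -> M -> R) : Prop :=
  forall w, is_distr (sigma w).
Definition act_strat (rho : M -> A -> R) : Prop :=
  forall m, is_distr (rho m).

Definition payoff (mu0 : Om -> R) (u : A -> Om -> R)
    (sigma : Om -> M -> R) (rho : M -> A -> R) : R :=
  \sum_(w : Om) \sum_(m : M) \sum_(a : A) mu0 w * sigma w m * rho m a * u a w.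

Definition S_BR mu0 (uS : A -> Om -> R) sigma rho : Prop :=
  forall sigma', msg_strat sigma' -> payoff mu0 uS sigma' rho <= payoff mu0 uS sigma rho.
Definition R_BR mu0 (uR : A -> Om -> R) sigma rho : Prop :=
  forall rho', act_strat rho' -> payoff mu0 uR sigma rho' <= payoff mu0 uR sigma rho.

Definition profile sigma rho : Prop := msg_strat sigma /\ act_strat rho.

Definition cheap_talk_eq mu0 uS uR sigma rho : Prop :=
  profile sigma rho /\ S_BR mu0 uS sigma rho /\ R_BR mu0 uR sigma rho.

Definition is_persuasion_payoff mu0 uS uR (v : R) : Prop :=
  (exists sigma rho, profile sigma rho /\ R_BR mu0 uR sigma rho
                     /\ payoff mu0 uS sigma rho = v) /\
  (forall sigma rho, profile sigma rho -> R_BR mu0 uR sigma rho ->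
                     payoff mu0 uS sigma rho <= v).

Definition is_cheap_talk_payoff mu0 uS uR (v : R) : Prop :=
  (exists sigma rho, cheap_talk_eq mu0 uS uR sigma rho
                     /\ payoff mu0 uS sigma rho = v) /\
  (forall sigma rho, cheap_talk_eq mu0 uS uR sigma rho ->
                     payoff mu0 uS sigma rho <= v).

Definition commitment_no_value mu0 uS uR : Prop :=
  exists v, is_persuasion_payoff mu0 uS uR v /\ is_cheap_talk_payoff mu0 uS uR v.

Definition transparent (uS : A -> Om -> R) : Prop :=
  exists v : A -> R, forall a w, uS a w = v a.

Definition no_duplicate_actions (uS : A -> Om -> R) : Prop :=
  exists v : A -> R, (forall a w, uS a w = v a) /\ (forall a a', a != a' -> v a != v a').

Definition M_sigma (sigma : Om -> M -> R) : {set M} :=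
  [set m | [exists w, 0 < sigma w m]].

Definition simple_babbling_eq mu0 uS uR sigma rho : Prop :=
  cheap_talk_eq mu0 uS uR sigma rho /\ #|M_sigma sigma| = 1%N /\
  exists a0 : A, forall m : M, rho m a0 = 1.

End CheapTalk.

From mathcomp Require Import all_boot all_order all_algebra.
From mathcomp Require Import reals.
From mathcomp Require Import ring lra.
Import Order.TTheory GRing.Theory Num.Theory.
Local Open Scope ring_scope.
Set Implicit Arguments. Unset Strict Implicit. Unset Printing Implicit Defensive.

(* Let (sigma, rho) be a cheap-talk equilibrium attaining the persuasion payoff
   V.  Since the sender's payoff v a does not depend on the state, sender
   optimality forces every message in use to induce the same expected value V.
   Any action a played after a used message is a receiver best reply there, and
   switching the receiver to a pure best reply b at that message keeps the profile
   R-BR, so persuasion-optimality gives v b <= V; averaging over the support of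
   rho, v a = V.  As v is injective, a single action a0 is played after every
   used message and is a best reply to each of them; summing over messages, a0
   maximises the receiver's prior expected payoff, so always playing a0 after a
   single message is a babbling equilibrium worth v a0 = V. *)

Section Expectation.
Variables (R : realType) (T : finType).
Implicit Types (p f : T -> R) (c : R).

Definition expect p f : R := \sum_t p t * f t.

Definition point_mass (t0 : T) : T -> R := fun t => (t == t0)%:R.

Lemma point_mass_distr t0 : is_distr (point_mass t0).
Proof.
split=> [t|]; first exact: ler0n.
by rewrite (bigD1 t0) //= big1 => [|t /negbTE]; rewrite /point_mass ?eqxx ?addr0 // => ->.
Qed.

Lemma expect_point_mass t0 f : expect (point_mass t0) f = f t0.
Proof.
rewrite /expect (bigD1 t0) //= big1 => [|t /negbTE]; rewrite /point_mass.
  by rewrite eqxx mul1r addr0.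
by move=> ->; rewrite mul0r.
Qed.

Lemma eq_expect p f g : f =1 g -> expect p f = expect p g.
Proof. by move=> fg; apply: eq_bigr => t _; rewrite fg. Qed.

Lemma expectZ p f c : expect p (fun t => c * f t) = c * expect p f.
Proof. by rewrite /expect mulr_sumr; apply: eq_bigr => t _; rewrite mulrCA. Qed.

Lemma expect_cst p c : is_distr p -> expect p (fun=> c) = c.
Proof. by move=> [_ p1]; rewrite /expect -mulr_suml p1 mul1r. Qed.

Lemma distr_support_nonempty p : is_distr p -> exists t, 0 < p t.
Proof.
move=> [p_ge0 p1]; apply/existsP; apply: contraLR isT => /existsPn p_le0.
have p0 t : p t = 0 by apply/eqP; rewrite eq_le p_ge0 andbT leNgt p_le0.
by move: p1; rewrite big1 // => /eqP; rewrite eq_sym oner_eq0.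
Qed.

Lemma subr_expect p f c :
  is_distr p -> c - expect p f = \sum_t p t * (c - f t).
Proof.
move=> p_distr; rewrite -{1}(expect_cst c p_distr) /expect -sumrB.
by apply: eq_bigr => t _; rewrite mulrBr.
Qed.

Lemma expect_gap_ge0 p f c :
  is_distr p -> (forall t, 0 < p t -> f t <= c) -> forall t, 0 <= p t * (c - f t).
Proof.
move=> [p_ge0 _] f_le t; have := p_ge0 t; rewrite le0r => /orP[/eqP -> | pt_gt0].
  by rewrite mul0r.
by apply: mulr_ge0; [exact: ltW | rewrite subr_ge0 f_le].
Qed.

Lemma expect_le_bound p f c :
  is_distr p -> (forall t, 0 < p t -> f t <= c) -> expect p f <= c.
Proof.
move=> p_distr f_le; rewrite -subr_ge0 subr_expect //.
by apply: sumr_ge0 => t _; apply: expect_gap_ge0.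
Qed.

Lemma expect_eq_bound p f c :
  is_distr p -> (forall t, 0 < p t -> f t <= c) -> expect p f = c ->
  forall t, 0 < p t -> f t = c.
Proof.
move=> p_distr f_le pf_c t pt_gt0.
have gap0 : \sum_t p t * (c - f t) = 0 by rewrite -subr_expect // pf_c subrr.
have /(_ t isT)/eqP := psumr_eq0P (fun t _ => expect_gap_ge0 p_distr f_le t) gap0.
by rewrite mulf_eq0 gt_eqF //= subr_eq0 => /eqP.
Qed.

Lemma argmax_exists f (t0 : T) : exists t, forall t', f t' <= f t.
Proof.
by exists [arg max_(t > t0) f t]%O; case: arg_maxP => // t _ t_max t'; apply: t_max.
Qed.

End Expectation.

Arguments point_mass {R T} t0 t.
Arguments point_mass_distr {R T} t0.

Section Game.
Variables (R : realType) (A Om M : finType) (mu0 : Om -> R).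
Hypotheses (mu0_gt0 : forall w, 0 < mu0 w) (mu0_sum1 : \sum_w mu0 w = 1).
Implicit Types (u : A -> Om -> R) (sigma : Om -> M -> R) (rho : M -> A -> R).

Definition msg_prob sigma m : R := \sum_w mu0 w * sigma w m.

Definition interim_payoff u sigma m a : R := \sum_w mu0 w * sigma w m * u a w.

Definition prior_payoff u a : R := \sum_w mu0 w * u a w.

Definition set_response rho m b : M -> A -> R :=
  fun m' => if m' == m then point_mass b else rho m'.

Lemma payoff_interimE u sigma rho :
  payoff mu0 u sigma rho = \sum_m expect (rho m) (interim_payoff u sigma m).
Proof.
rewrite /payoff exchange_big; apply: eq_bigr => m _.
rewrite /expect exchange_big; apply: eq_bigr => a _.
by rewrite /interim_payoff mulr_sumr; apply: eq_bigr => w _; rewrite mulrCA !mulrA.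
Qed.

Lemma act_strat_set_response rho m b :
  act_strat rho -> act_strat (set_response rho m b).
Proof.
by move=> rho_strat m'; rewrite /set_response; case: eqP => _; [apply: point_mass_distr|].
Qed.

Lemma payoff_set_response u sigma rho m b :
  payoff mu0 u sigma (set_response rho m b) =
  payoff mu0 u sigma rho
  + (interim_payoff u sigma m b - expect (rho m) (interim_payoff u sigma m)).
Proof.
rewrite !payoff_interimE (bigD1 m) //= [in RHS](bigD1 m) //=.
rewrite {1}/set_response eqxx expect_point_mass.
rewrite (eq_bigr (fun m' => expect (rho m') (interim_payoff u sigma m'))); first lra.
by move=> m' /negbTE; rewrite /set_response => ->.
Qed.

Lemma msg_prob_distr sigma : msg_strat sigma -> is_distr (msg_prob sigma).
Proof.
move=> sigma_strat; split=> [m|].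
  by apply: sumr_ge0 => w _; apply: mulr_ge0; [exact: ltW | exact: (sigma_strat w).1].
rewrite /msg_prob exchange_big -[RHS]mu0_sum1; apply: eq_bigr => w _.
by rewrite -mulr_sumr (sigma_strat w).2 mulr1.
Qed.

Lemma msg_prob_gt0 sigma w m :
  msg_strat sigma -> 0 < sigma w m -> 0 < msg_prob sigma m.
Proof.
move=> sigma_strat swm_gt0; rewrite /msg_prob (bigD1 w) //=.
apply: ltr_pwDl; first by rewrite mulr_gt0.
by apply: sumr_ge0 => w' _; apply: mulr_ge0; [exact: ltW | exact: (sigma_strat w').1].
Qed.

Lemma interim_payoff_unused u sigma m a :
  msg_strat sigma -> m \notin M_sigma sigma -> interim_payoff u sigma m a = 0.
Proof.
move=> sigma_strat; rewrite inE => /existsPn sigma_le0.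
rewrite /interim_payoff big1 // => w _.
suff -> : sigma w m = 0 by rewrite mulr0 mul0r.
by apply/eqP; rewrite eq_le (sigma_strat w).1 andbT leNgt sigma_le0.
Qed.

Lemma sum_interim_payoff u sigma a :
  msg_strat sigma -> \sum_m interim_payoff u sigma m a = prior_payoff u a.
Proof.
move=> sigma_strat; rewrite /interim_payoff exchange_big; apply: eq_bigr => w _.
by rewrite -mulr_suml -mulr_sumr (sigma_strat w).2 mulr1.
Qed.

Lemma R_BR_best_reply uR sigma rho m b :
  act_strat rho -> R_BR mu0 uR sigma rho ->
  interim_payoff uR sigma m b <= expect (rho m) (interim_payoff uR sigma m).
Proof.
move=> rho_strat rho_br.
have := rho_br _ (act_strat_set_response m b rho_strat).
rewrite payoff_set_response; lra.
Qed.

Lemma R_BR_support_best_reply uR sigma rho m a b :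
  act_strat rho -> R_BR mu0 uR sigma rho -> 0 < rho m a ->
  interim_payoff uR sigma m b <= interim_payoff uR sigma m a.
Proof.
move=> rho_strat rho_br rma_gt0.
rewrite (expect_eq_bound (rho_strat m) _ erefl rma_gt0) //.
  exact: R_BR_best_reply.
by move=> a' _; apply: R_BR_best_reply.
Qed.

Lemma R_BR_set_response uR sigma rho m b :
  act_strat rho -> R_BR mu0 uR sigma rho ->
  (forall b', interim_payoff uR sigma m b' <= interim_payoff uR sigma m b) ->
  R_BR mu0 uR sigma (set_response rho m b).
Proof.
move=> rho_strat rho_br b_best rho' rho'_strat.
have le_b : expect (rho m) (interim_payoff uR sigma m) <= interim_payoff uR sigma m b.
  by apply: expect_le_bound (rho_strat m) _ => a _.
have := rho_br _ rho'_strat; have := R_BR_best_reply m b rho_strat rho_br.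
rewrite payoff_set_response; lra.
Qed.

Lemma payoff_pooling_act u sigma a0 :
  msg_strat sigma -> payoff mu0 u sigma (fun _ => point_mass a0) = prior_payoff u a0.
Proof.
move=> sigma_strat; rewrite payoff_interimE.
under eq_bigr => m _ do rewrite expect_point_mass.
exact: sum_interim_payoff.
Qed.

Lemma payoff_pooling_msg u m0 rho :
  payoff mu0 u (fun _ => point_mass m0) rho = expect (rho m0) (prior_payoff u).
Proof.
rewrite payoff_interimE -[RHS](expect_point_mass m0 (fun m => expect (rho m) _)).
apply: eq_bigr => m _; rewrite /expect mulr_sumr; apply: eq_bigr => a _.
rewrite /interim_payoff /prior_payoff !mulr_sumr; apply: eq_bigr => w _.
ring.
Qed.

Lemma M_sigma_pooling (m0 : M) :
  (0 < #|Om|)%N -> M_sigma (fun _ : Om => point_mass m0 : M -> R) = [set m0].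
Proof.
case/card_gt0P=> w0 _; apply/setP => m; rewrite !inE /point_mass.
by case: eqP => _; [apply/existsP; exists w0 | apply/existsPn => w]; rewrite ?ltr01 ?ltxx.
Qed.

Lemma simple_babbling_eq_prior_best uS uR (m0 : M) (a0 : A) :
  (0 < #|Om|)%N -> (forall a, prior_payoff uR a <= prior_payoff uR a0) ->
  simple_babbling_eq mu0 uS uR (fun _ => point_mass m0) (fun _ => point_mass a0).
Proof.
move=> Om_gt0 a0_best; split; last first.
  by split; [rewrite M_sigma_pooling ?cards1 | exists a0 => m; rewrite /point_mass eqxx].
split; first by split=> ?; apply: point_mass_distr.
split=> [sigma' sigma'_strat | rho' rho'_strat].
  by rewrite !payoff_pooling_act // => w; apply: point_mass_distr.
rewrite !payoff_pooling_msg expect_point_mass.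
by apply: expect_le_bound (rho'_strat m0) _ => a _.
Qed.

Definition persuasion_optimal uS uR sigma rho : Prop :=
  forall sigma' rho', profile sigma' rho' -> R_BR mu0 uR sigma' rho' ->
  payoff mu0 uS sigma' rho' <= payoff mu0 uS sigma rho.

Section TransparentSender.
Variables (uS : A -> Om -> R) (v : A -> R).
Hypothesis uS_v : forall a w, uS a w = v a.

Lemma prior_payoff_transparent a : prior_payoff uS a = v a.
Proof.
rewrite /prior_payoff -[v a]mul1r -mu0_sum1 mulr_suml.
by apply: eq_bigr => w _; rewrite uS_v.
Qed.

Lemma interim_payoff_transparent sigma m a :
  interim_payoff uS sigma m a = msg_prob sigma m * v a.
Proof. by rewrite /interim_payoff mulr_suml; apply: eq_bigr => w _; rewrite uS_v. Qed.

Lemma expect_interim_transparent sigma rho m :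
  expect (rho m) (interim_payoff uS sigma m) = msg_prob sigma m * expect (rho m) v.
Proof. by rewrite -expectZ; apply: eq_expect => a; apply: interim_payoff_transparent. Qed.

Lemma payoff_transparent sigma rho :
  payoff mu0 uS sigma rho = expect (msg_prob sigma) (fun m => expect (rho m) v).
Proof.
by rewrite payoff_interimE; apply: eq_bigr => m _; apply: expect_interim_transparent.
Qed.

Lemma S_BR_used_msg_value sigma rho m :
  profile sigma rho -> S_BR mu0 uS sigma rho -> m \in M_sigma sigma ->
  expect (rho m) v = payoff mu0 uS sigma rho.
Proof.
move=> [sigma_strat rho_strat] sigma_br; rewrite inE => /existsP[w swm_gt0].
pose g m := expect (rho m) v.
have [mstar g_max] := argmax_exists g m.
have payoff_le : payoff mu0 uS sigma rho <= g mstar.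
  rewrite payoff_transparent.
  by apply: expect_le_bound (msg_prob_distr sigma_strat) _ => m' _; apply: g_max.
have payoff_ge : g mstar <= payoff mu0 uS sigma rho.
  have := sigma_br _ (fun=> point_mass_distr mstar).
  by rewrite payoff_pooling_msg (eq_expect _ prior_payoff_transparent).
have payoff_eq : payoff mu0 uS sigma rho = g mstar.
  by apply/eqP; rewrite eq_le payoff_le payoff_ge.
rewrite payoff_eq; apply: (expect_eq_bound (f := g) (msg_prob_distr sigma_strat)).
- by move=> m' _; apply: g_max.
- by rewrite -payoff_eq payoff_transparent.
- exact: msg_prob_gt0 sigma_strat swm_gt0.
Qed.

Lemma persuasion_optimal_best_reply_value uR sigma rho m b :
  profile sigma rho -> R_BR mu0 uR sigma rho -> persuasion_optimal uS uR sigma rho ->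
  m \in M_sigma sigma ->
  (forall b', interim_payoff uR sigma m b' <= interim_payoff uR sigma m b) ->
  v b <= expect (rho m) v.
Proof.
move=> [sigma_strat rho_strat] rho_br rho_opt; rewrite inE => /existsP[w swm_gt0] b_best.
have := rho_opt _ _ (conj sigma_strat (act_strat_set_response m b rho_strat))
  (R_BR_set_response rho_strat rho_br b_best).
rewrite payoff_set_response interim_payoff_transparent expect_interim_transparent.
rewrite -mulrBr gerDl pmulr_rle0 ?subr_le0 //.
exact: msg_prob_gt0 sigma_strat swm_gt0.
Qed.

Lemma persuasion_optimal_support_value uR sigma rho m a :
  cheap_talk_eq mu0 uS uR sigma rho -> persuasion_optimal uS uR sigma rho ->
  m \in M_sigma sigma -> 0 < rho m a -> v a = payoff mu0 uS sigma rho.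
Proof.
move=> [[sigma_strat rho_strat] [sigma_br rho_br]] rho_opt m_used rma_gt0.
rewrite -(S_BR_used_msg_value (conj sigma_strat rho_strat) sigma_br m_used).
apply: (expect_eq_bound (rho_strat m)) => // a' rma'_gt0.
apply: (persuasion_optimal_best_reply_value (conj sigma_strat rho_strat) rho_br rho_opt m_used).
move=> b; exact: R_BR_support_best_reply.
Qed.

Lemma persuasion_optimal_pooling_action uR sigma rho :
  injective v -> (0 < #|Om|)%N ->
  cheap_talk_eq mu0 uS uR sigma rho -> persuasion_optimal uS uR sigma rho ->
  exists a0, v a0 = payoff mu0 uS sigma rho /\
             forall a, prior_payoff uR a <= prior_payoff uR a0.
Proof.
move=> v_inj /card_gt0P[w0 _] sr_eq rho_opt.
have [[sigma_strat rho_strat] [_ rho_br]] := sr_eq.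
have [m0 sm0_gt0] := distr_support_nonempty (sigma_strat w0).
have [a0 ra0_gt0] := distr_support_nonempty (rho_strat m0).
have m0_used : m0 \in M_sigma sigma by rewrite inE; apply/existsP; exists w0.
have a0_value := persuasion_optimal_support_value sr_eq rho_opt m0_used ra0_gt0.
exists a0; split => // a.
rewrite -!(sum_interim_payoff _ _ sigma_strat); apply: ler_sum => m _.
have [m_used | m_unused] := boolP (m \in M_sigma sigma); last first.
  by rewrite !interim_payoff_unused.
have [a1 ra1_gt0] := distr_support_nonempty (rho_strat m).
suff -> : a0 = a1 by apply: R_BR_support_best_reply.
apply: v_inj.
by rewrite a0_value (persuasion_optimal_support_value sr_eq rho_opt m_used ra1_gt0).
Qed.

End TransparentSender.

End Game.

Theorem lemma12 (R : realType) (A Om M : finType)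
  (mu0 : Om -> R) (uS uR : A -> Om -> R) :
  (0 < #|A|)%N -> (0 < #|Om|)%N ->
  (maxn #|Om| #|A| < #|M|)%N ->
  (forall w, 0 < mu0 w) -> \sum_(w : Om) mu0 w = 1 ->
  (forall a w, 0 <= uS a w <= 1) -> (forall a w, 0 <= uR a w <= 1) ->
  transparent uS -> no_duplicate_actions uS ->
  commitment_no_value M mu0 uS uR ->
  exists (sigma : Om -> M -> R) (rho : M -> A -> R),
    simple_babbling_eq mu0 uS uR sigma rho /\
    is_persuasion_payoff M mu0 uS uR (payoff mu0 uS sigma rho).
Proof.
move=> _ Om_gt0 M_big mu0_gt0 mu0_sum1 _ _ _ [v [uS_v v_neq]]
  [V [V_pers [[sigma [rho [sr_eq sr_V]]] _]]].
have v_inj : injective v by move=> a a'; apply: contra_eq (v_neq a a').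
have rho_opt : persuasion_optimal mu0 uS uR sigma rho.
  by move=> sigma' rho' sr'; rewrite sr_V; apply: V_pers.2.
have [a0 [a0_value a0_best]] :=
  persuasion_optimal_pooling_action mu0_gt0 mu0_sum1 uS_v v_inj Om_gt0 sr_eq rho_opt.
have [m0 _] : exists m0 : M, true.
  by apply/card_gt0P; apply: leq_ltn_trans M_big.
exists (fun _ => point_mass m0), (fun _ => point_mass a0); split.
  exact: simple_babbling_eq_prior_best.
rewrite payoff_pooling_act ?(prior_payoff_transparent mu0_sum1 uS_v) ?a0_value ?sr_V //.
by move=> w; apply: point_mass_distr.
Qed.
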